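(* Let $(X,\mathsf{d}_X)$ be a compact metric space and $\mathfrak{A}$ a unital C*-algebra, let $\mu$ be a state of $C(X,\mathfrak{A})$, let $q\in\{C(X),\mathbb{C},\mu\}$, and let $\|\cdot\|_{\mathsf{n}}$ be a norm on $\mathfrak{A}$ (over $\mathbb{R}$ or $\mathbb{C}$) equivalent to the C*-norm $\|\cdot\|_{\mathfrak{A}}$. Then $\mathsf{L}^{(\mathsf{n}),q}_{\mathsf{d}_X}$ is lower semi-continuous with respect to $\|\cdot\|_{C(X,\mathfrak{A})}$, the set $\{a\in C(X,\mathfrak{A}):\mathsf{L}^{(\mathsf{n}),q}_{\mathsf{d}_X}(a)<\infty\}$ is dense in $C(X,\mathfrak{A})$, and the set $\{a\in C(X,\mathfrak{A}): a=a^*,\ \mathsf{L}^{(\mathsf{n}),q}_{\mathsf{d}_X}(a)<\infty\}$ is dense in the self-adjoint part of $C(X,\mathfrak{A})$.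
   Context: $C(X,\mathfrak{A})$ is the unital C*-algebra of continuous $\mathfrak{A}$-valued functions on $X$ with pointwise operations, supremum norm, and unit the constant $1_{\mathfrak{A}}$; $C(X,\mathbb{C}1_{\mathfrak{A}})$ is the subalgebra of functions with values in $\mathbb{C}1_{\mathfrak{A}}$. For $a\in C(X,\mathfrak{A})$, $l^{(\mathsf{n})}_{\mathsf{d}_X}(a)=\sup_{x\ne y}\|a(x)-a(y)\|_{\mathsf{n}}/\mathsf{d}_X(x,y)$, and $\mathsf{L}^{(\mathsf{n}),C(X)}_{\mathsf{d}_X}(a)=\max\{l^{(\mathsf{n})}_{\mathsf{d}_X}(a),\inf_{b\in C(X,\mathbb{C}1_{\mathfrak{A}})}\|a-b\|\}$, $\mathsf{L}^{(\mathsf{n}),\mathbb{C}}_{\mathsf{d}_X}(a)=\max\{l^{(\mathsf{n})}_{\mathsf{d}_X}(a),\inf_{\lambda\in\mathbb{C}}\|a-\lambda1\|\}$, $\mathsf{L}^{(\mathsf{n}),\mu}_{\mathsf{d}_X}(a)=\max\{l^{(\mathsf{n})}_{\mathsf{d}_X}(a),\|a-\mu(a)1\|\}$, all norms being the supremum norm of $C(X,\mathfrak{A})$. *)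

From HB Require Import structures.
From mathcomp Require Import all_boot all_order all_algebra.
From mathcomp Require Import all_classical all_reals.
From mathcomp Require Import ereal.
From mathcomp.real_closed Require Import complex.
Import Order.TTheory GRing.Theory Num.Theory.

Set Implicit Arguments.
Unset Strict Implicit.
Unset Printing Implicit Defensive.

Local Open Scope ring_scope.
Local Open Scope classical_set_scope.
Local Open Scope complex_scope.
Local Open Scope ring_scope.

Definition is_metric (R : realType) (X : Type) (d : X -> X -> R) : Prop :=
  [/\ (forall x y, 0 <= d x y),
      (forall x y, d x y = 0 <-> x = y),
      (forall x y, d x y = d y x) &
      (forall x y z, d x z <= d x y + d y z)].

Definition d_open (R : realType) (X : Type) (d : X -> X -> R) (U : set X) : Prop :=
  forall x, U x -> exists2 r : R, 0 < r & forall y, d x y < r -> U y.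

Definition d_compact (R : realType) (X : Type) (d : X -> X -> R) : Prop :=
  forall (I : Type) (U : I -> set X),
    (forall i, d_open d (U i)) -> (forall x, exists i, U i x) ->
    exists (n : nat) (f : 'I_n -> I), forall x, exists k, U (f k) x.

Definition is_norm_C (R : realType) (A : algType R[i]) (nA : A -> R) : Prop :=
  [/\ (forall a, 0 <= nA a),
      (forall a, nA a = 0 -> a = 0),
      (forall a b, nA (a + b) <= nA a + nA b) &
      (forall (c : R[i]) a, (nA (c *: a))%:C = `|c| * (nA a)%:C)].

Definition is_complete (R : realType) (A : algType R[i]) (nA : A -> R) : Prop :=
  forall u : nat -> A,
    (forall e : R, 0 < e -> exists N, forall m n, (N <= m)%N -> (N <= n)%N ->
        nA (u m - u n) < e) ->
    exists l : A, forall e : R, 0 < e -> exists N, forall n, (N <= n)%N ->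
        nA (u n - l) < e.

Definition is_unital_Cstar (R : realType) (A : algType R[i])
    (star : A -> A) (nA : A -> R) : Prop :=
  [/\ is_norm_C nA,
      (forall a b, nA (a * b) <= nA a * nA b),
      is_complete nA,
      [/\ (forall a b, star (a + b) = star a + star b),
          (forall (c : R[i]) a, star (c *: a) = c^* *: star a),
          (forall a b, star (a * b) = star b * star a) &
          (forall a, star (star a) = a)] &
      (forall a, nA (star a * a) = nA a ^+ 2)].

(** A norm on A over R (real-homogeneous; complex norms are special cases)
    equivalent to the C*-norm. *)
Definition is_equiv_norm (R : realType) (A : algType R[i]) (nA nn : A -> R) : Prop :=
  [/\ (forall a, 0 <= nn a),
      (forall a, nn a = 0 -> a = 0),
      (forall a b, nn (a + b) <= nn a + nn b),
      (forall (r : R) a, nn (r%:C *: a) = `|r| * nn a) &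
      exists2 c1 : R, 0 < c1 & exists2 c2 : R, 0 < c2 &
        forall a, c1 * nA a <= nn a /\ nn a <= c2 * nA a].

Definition contf (R : realType) (X : Type) (d : X -> X -> R) (A : algType R[i])
    (nA : A -> R) (a : X -> A) : Prop :=
  forall x (e : R), 0 < e -> exists2 delta : R, 0 < delta &
    forall y, d x y < delta -> nA (a x - a y) < e.

Definition supnorm (R : realType) (X : Type) (A : algType R[i]) (nA : A -> R)
    (a : X -> A) : R := sup [set nA (a x) | x in [set: X]].


Definition is_state (R : realType) (X : Type) (d : X -> X -> R) (A : algType R[i])
    (star : A -> A) (nA : A -> R) (mu : (X -> A) -> R[i]) : Prop :=
  [/\ (forall a b, contf d nA a -> contf d nA b ->
          mu (fun x => a x + b x) = mu a + mu b),
      (forall (c : R[i]) a, contf d nA a -> mu (fun x => c *: a x) = c * mu a),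
      (forall a, contf d nA a -> 0 <= mu (fun x => star (a x) * a x)),
      (forall a, contf d nA a -> `|mu a| <= (supnorm nA a)%:C) &
      (forall e : R, 0 < e -> exists a, [/\ contf d nA a, supnorm nA a <= 1 &
          (1 - e)%:C < `|mu a|])].

Definition lip_n (R : realType) (X : Type) (d : X -> X -> R) (A : algType R[i])
    (nn : A -> R) (a : X -> A) : \bar R :=
  ereal_sup [set z : \bar R | exists x y, x <> y /\
                 z = ((nn (a x - a y)) / d x y)%:E].

Inductive qsel := q_CX | q_C | q_mu.

Definition qterm (R : realType) (X : Type) (d : X -> X -> R) (A : algType R[i])
    (nA : A -> R) (mu : (X -> A) -> R[i]) (q : qsel) (a : X -> A) : R :=
  match q with
  | q_CX => inf [set supnorm nA (fun x => a x - b x) | b in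
                  [set b : X -> A | contf d nA b /\
                     forall x, exists c : R[i], b x = c *: 1]]
  | q_C => inf [set supnorm nA (fun x => a x - c *: 1) | c in [set: R[i]]]
  | q_mu => supnorm nA (fun x => a x - mu a *: 1)
  end.

Definition Lq (R : realType) (X : Type) (d : X -> X -> R) (A : algType R[i])
    (nA nn : A -> R) (mu : (X -> A) -> R[i]) (q : qsel) (a : X -> A) : \bar R :=
  Order.max (lip_n d nn a) (qterm d nA mu q a)%:E.

Definition lsc_on_CXA (R : realType) (X : Type) (d : X -> X -> R) (A : algType R[i])
    (nA : A -> R) (L : (X -> A) -> \bar R) : Prop :=
  forall a, contf d nA a -> forall t : \bar R, (t < L a)%E ->
    exists2 delta : R, 0 < delta & forall b, contf d nA b ->
      supnorm nA (fun x => a x - b x) < delta -> (t < L b)%E.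

From HB Require Import structures.
From mathcomp Require Import all_boot all_order all_algebra.
From mathcomp Require Import all_classical all_reals.
From mathcomp Require Import ereal.
From mathcomp.real_closed Require Import complex.
From mathcomp Require Import ring lra.
Import Order.TTheory GRing.Theory Num.Theory.
Local Open Scope classical_set_scope.
Local Open Scope complex_scope.
Local Open Scope ring_scope.
Set Implicit Arguments.
Unset Strict Implicit.
Unset Printing Implicit Defensive.

(* Lower semicontinuity: [l^(n)] is a supremum of the functions
   [a |-> n(a x - a y) / d x y], each continuous for the sup norm since [n] is
   dominated by the C*-norm, and the quotient term is Lipschitz in [a] (for
   [q = mu] because a state has norm one).  Density: by compactness, cover [X]
   by finitely many balls [B(x_k, delta_k / 2)] on which [a] oscillates by
   less than [e], and take a Lipschitz partition of unity [w_k] built from the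
   bumps [max (delta_k - d x_k x) 0].  Then [b = sum_k w_k *: a x_k] is
   Lipschitz and [e]-close to [a]; its coefficients are real, so [b] is
   self-adjoint when [a] is. *)

Definition real_seminorm (R : realType) (A : algType R[i]) (nm : A -> R) :=
  [/\ forall a, 0 <= nm a, forall a b, nm (a + b) <= nm a + nm b &
      forall (r : R) a, nm (r%:C *: a) = `|r| * nm a].

Section RealSeminorm.
Variables (R : realType) (A : algType R[i]) (nm : A -> R).
Hypothesis hnm : real_seminorm nm.

Lemma seminorm_ge0 a : 0 <= nm a.
Proof. by case: hnm. Qed.

Lemma seminormD a b : nm (a + b) <= nm a + nm b.
Proof. by case: hnm. Qed.

Lemma seminormZ (r : R) a : nm (r%:C *: a) = `|r| * nm a.
Proof. by case: hnm. Qed.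

Lemma seminorm0 : nm 0 = 0.
Proof. by have := seminormZ 0 0; rewrite scaler0 normr0 mul0r. Qed.

Lemma seminormN a : nm (- a) = nm a.
Proof. by have := seminormZ (-1) a; rewrite rmorphN1 scaleN1r normrN1 mul1r. Qed.

Lemma seminorm_distC a b : nm (a - b) = nm (b - a).
Proof. by rewrite -opprB seminormN. Qed.

Lemma seminorm_dist_triangle a b c : nm (a - c) <= nm (a - b) + nm (b - c).
Proof. by have := seminormD (a - b) (b - c); rewrite addrA subrK. Qed.

Lemma seminorm_sum n (F : 'I_n -> A) : nm (\sum_(i < n) F i) <= \sum_(i < n) nm (F i).
Proof.
elim/big_rec2: _ => [|i y1 y2 _ IH]; first by rewrite seminorm0.
by apply: le_trans (seminormD _ _) _; rewrite lerD2l.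
Qed.

End RealSeminorm.

Lemma norm_real_complex (R : realType) (r : R) : `|r%:C| = `|r|%:C.
Proof. by rewrite normc_def /= expr0n addr0 sqrtr_sqr. Qed.

Lemma conj_real_complex (R : realType) (r : R) : (r%:C)^* = r%:C.
Proof. exact: conjc_real. Qed.

Lemma norm_C_real_seminorm (R : realType) (A : algType R[i]) (nA : A -> R) :
  is_norm_C nA -> real_seminorm nA.
Proof.
case=> nA_ge0 _ nAD nAZ; split => // r a; apply: complexI.
by rewrite nAZ norm_real_complex rmorphM.
Qed.

Lemma equiv_norm_real_seminorm (R : realType) (A : algType R[i]) (nA nn : A -> R) :
  is_equiv_norm nA nn -> real_seminorm nn.
Proof. by case=> nn_ge0 _ nnD nnZ _; split. Qed.

Section SupNorm.
Variables (R : realType) (X : Type) (A : algType R[i]) (nA : A -> R).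

Lemma supnorm_ge0 (f : X -> A) : (forall a, 0 <= nA a) -> 0 <= supnorm nA f.
Proof.
move=> nA_ge0; rewrite /supnorm.
have [hs|hs] := pselect (has_sup [set nA (f x) | x in [set: X]]); last by rewrite sup_out.
case: (hs) => -[_ [x _ _]] _; apply: le_trans (nA_ge0 (f x)) _.
by apply: ub_le_sup; [case: hs | exists x].
Qed.

Lemma ler_supnorm (f : X -> A) x :
  (exists M, forall y, nA (f y) <= M) -> nA (f x) <= supnorm nA f.
Proof. by move=> [M hM]; apply: ub_le_sup; [exists M => _ [y _ <-] | exists x]. Qed.

Lemma supnorm_le_ub (f : X -> A) M :
  0 <= M -> (forall y, nA (f y) <= M) -> supnorm nA f <= M.
Proof.
move=> M0 hM; rewrite /supnorm.
have [ne|ne] := pselect ([set nA (f x) | x in [set: X]] !=set0).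
  by apply: ge_sup => // _ [y _ <-].
suff -> : [set nA (f x) | x in [set: X]] = set0 by rewrite sup0.
by apply/seteqP; split => y Sy //; exfalso; apply: ne; exists y.
Qed.

End SupNorm.

Section Continuity.
Variables (R : realType) (X : Type) (d : X -> X -> R) (A : algType R[i]) (nA : A -> R).
Hypothesis hnA : real_seminorm nA.

Lemma contfB a b : contf d nA a -> contf d nA b -> contf d nA (fun x => a x - b x).
Proof.
move=> ca cb x e e0.
have e2 : 0 < e / 2 by rewrite divr_gt0.
have [d1 d10 h1] := ca x _ e2; have [d2 d20 h2] := cb x _ e2.
exists (Num.min d1 d2); first by rewrite lt_min d10 d20.
move=> y; rewrite lt_min => /andP[y1 y2].
have -> : a x - b x - (a y - b y) = (a x - a y) + (- (b x - b y)).
  by rewrite !opprD !opprK addrACA.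
apply: le_lt_trans (seminormD hnA _ _) _.
by rewrite seminormN // (splitr e) ltrD ?h1 ?h2.
Qed.

Lemma contf_cst (c : A) : contf d nA (fun _ => c).
Proof. by move=> x e e0; exists 1 => // y _; rewrite subrr seminorm0. Qed.

Lemma lipschitz_contf f K : is_metric d ->
  (forall x y, nA (f x - f y) <= K * d x y) -> contf d nA f.
Proof.
case=> d_ge0 _ _ _ fK x e e0.
have K1 : 0 < `|K| + 1 by rewrite ltr_wpDl.
exists (e / (`|K| + 1)); first by rewrite divr_gt0.
move=> y hy; apply: le_lt_trans (fK x y) _.
apply: le_lt_trans (_ : K * d x y <= (`|K| + 1) * d x y) _.
  by rewrite ler_wpM2r // ler_wpDr // ler_norm.
by rewrite mulrC -ltr_pdivlMr.
Qed.

End Continuity.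

Section Compactness.
Variables (R : realType) (X : Type) (d : X -> X -> R).
Hypotheses (hm : is_metric d) (dc : d_compact d).

Lemma finite_ball_cover (rho : X -> R) : (forall x, 0 < rho x) ->
  exists n (g : 'I_n -> X), forall y, exists k, d (g k) y < rho (g k).
Proof.
case: hm => _ d_eq0 _ dtri rho0.
have [|x|n [g hg]] := dc (U := fun x => [set y | d x y < rho x]); last by exists n, g.
- move=> x y /= hy; exists (rho x - d x y); first by rewrite subr_gt0.
  by move=> z hz; apply: le_lt_trans (dtri x y z) _; rewrite -ltrBrDl.
- by exists x => /=; rewrite (proj2 (d_eq0 x x) erefl).
Qed.

Variables (A : algType R[i]) (nA : A -> R).
Hypothesis hnA : real_seminorm nA.

Lemma contf_bounded f : contf d nA f -> exists M, forall x, nA (f x) <= M.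
Proof.
move=> cf.
have /choice [delta hdelta] :
    forall x, exists dl, 0 < dl /\ forall y, d x y < dl -> nA (f x - f y) < 1.
  by move=> x; have [dl ? ?] := cf x 1 ltr01; exists dl.
have [n [g hg]] := finite_ball_cover (fun x => (hdelta x).1).
exists (\sum_(k < n) nA (f (g k)) + 1) => y.
have [k hk] := hg y.
have fy : nA (f y) <= nA (f (g k)) + 1.
  rewrite -[f y](subrKC (f (g k))) -opprB.
  apply: le_trans (seminormD hnA _ _) _.
  by rewrite seminormN // lerD2l ltW // (hdelta _).2.
apply: le_trans fy _; rewrite lerD2r (bigD1 k) //= lerDl.
by apply: sumr_ge0 => i _; apply: seminorm_ge0.
Qed.

Lemma ler_supnorm_contf f x : contf d nA f -> nA (f x) <= supnorm nA f.
Proof. by move=> cf; apply: ler_supnorm; apply: contf_bounded. Qed.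

End Compactness.

Lemma ler_dist_max0 (R : realDomainType) (u v : R) :
  `|Num.max u 0 - Num.max v 0| <= `|u - v|.
Proof.
have := ler_norm (u - v); have := ler_norm (v - u); rewrite distrC => h1 h2.
rewrite ler_norml; case: (leP u 0) => hu; case: (leP v 0) => hv.
all: rewrite ?(max_r hu) ?(max_r hv) ?(max_l (ltW hu)) ?(max_l (ltW hv)).
all: apply/andP; split; lra.
Qed.

Lemma ler_dist_ratio (R : realFieldType) (p q s t D m rho : R) :
  0 < rho -> rho <= s -> rho <= t -> 0 <= q -> q <= t ->
  `|p - q| <= D -> `|s - t| <= m * D -> 0 <= m ->
  `|p / s - q / t| <= (1 + m) / rho * D.
Proof.
move=> rho0 rho_s rho_t q0 qt pqD stD m0.
have s0 : 0 < s by apply: lt_le_trans rho_s.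
have t0 : 0 < t by apply: lt_le_trans rho_t.
have -> : p / s - q / t = ((p - q) + (q / t) * (t - s)) / s.
  by field; rewrite ?gt_eqF.
have qt0 : 0 <= q / t by rewrite divr_ge0 // ltW.
have qt1 : q / t <= 1 by rewrite ler_pdivrMr // mul1r.
have D0 : 0 <= D by apply: le_trans (normr_ge0 _) pqD.
have num_le : `|(p - q) + (q / t) * (t - s)| <= (1 + m) * D.
  apply: le_trans (ler_normD _ _) _; rewrite mulrDl mul1r lerD //.
  rewrite normrM (ger0_norm qt0) distrC.
  have := normr_ge0 (s - t); nra.
have sV0 : 0 <= s^-1 by rewrite invr_ge0 ltW.
rewrite normrM (ger0_norm sV0) [X in _ <= X]mulrAC; apply: ler_pM => //.
by rewrite lef_pV2 ?posrE.
Qed.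

Lemma exists_pos_lbound (R : realFieldType) n (r : 'I_n -> R) :
  (forall k, 0 < r k) -> exists2 rho, 0 < rho & forall k, rho <= r k.
Proof.
move=> r0; have rV0 k : 0 <= (r k)^-1 by rewrite invr_ge0 ltW.
have sum0 : 0 <= \sum_(k < n) (r k)^-1 by apply: sumr_ge0.
exists (1 + \sum_(k < n) (r k)^-1)^-1; first by rewrite invr_gt0 ltr_wpDr.
move=> k; rewrite -[r k]invrK lef_pV2 ?posrE ?invr_gt0 ?ltr_wpDr //.
by rewrite (bigD1 k) //= addrCA lerDl addr_ge0 ?sumr_ge0.
Qed.

Section PartitionOfUnity.
Variables (R : realType) (X : Type) (d : X -> X -> R).
Hypotheses (hm : is_metric d) (dc : d_compact d).

Lemma lipschitz_partition_of_unity (delta : X -> R) : (forall x, 0 < delta x) ->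
  exists n (g : 'I_n -> X) (w : 'I_n -> X -> R) (L : R), [/\
    (forall k x, 0 <= w k x), (forall x, \sum_(k < n) w k x = 1),
    (forall k x, delta (g k) <= d (g k) x -> w k x = 0) &
    (forall k x y, `|w k x - w k y| <= L * d x y)].
Proof.
move=> delta0; have [d_ge0 _ dsym dtri] := hm.
have half0 x : 0 < delta x / 2 by rewrite divr_gt0.
have [n [g hg]] := finite_ball_cover hm dc half0.
pose r k := delta (g k).
pose phi k x := Num.max (r k - d (g k) x) 0.
pose S x := \sum_(k < n) phi k x.
have [rho rho0 rho_le] := exists_pos_lbound (fun k => half0 (g k)).
have phi0 k x : 0 <= phi k x by rewrite le_max lexx orbT.
have phi_lip k x y : `|phi k x - phi k y| <= d x y.
  apply: le_trans (ler_dist_max0 _ _) _.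
  have := dtri (g k) x y; have := dtri (g k) y x; rewrite (dsym y x) => h1 h2.
  rewrite ler_norml; apply/andP; split; lra.
have phi_le_S k x : phi k x <= S x.
  by rewrite /S (bigD1 k) //= lerDl; apply: sumr_ge0.
have rho_le_S x : rho <= S x.
  have [k hk] := hg x; apply: le_trans (rho_le k) (le_trans _ (phi_le_S k x)).
  by rewrite le_max; apply/orP; left; rewrite /r in hk *; lra.
have S0 x : 0 < S x by apply: lt_le_trans (rho_le_S x).
exists n, g, (fun k x => phi k x / S x), ((1 + n%:R) / rho); split.
- by move=> k x; rewrite divr_ge0 ?(ltW (S0 x)).
- by move=> x; rewrite -mulr_suml -/(S x) divff // gt_eqF ?S0.
- by move=> k x hk; rewrite /phi max_r ?mul0r // subr_le0.
- move=> k x y; apply: ler_dist_ratio => //.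
  rewrite /S -sumrB; apply: le_trans (ler_norm_sum _ _ _) _.
  apply: le_trans (ler_sum _ (fun k _ => phi_lip k x y)) _.
  by rewrite sumr_const card_ord mulr_natl.
Qed.

End PartitionOfUnity.

Section LipschitzApproximation.
Variables (R : realType) (X : Type) (d : X -> X -> R) (A : algType R[i]) (nA : A -> R).
Hypotheses (hm : is_metric d) (dc : d_compact d) (hnA : real_seminorm nA).

Lemma lipschitz_approximation (a : X -> A) (e : R) : contf d nA a -> 0 < e ->
  exists b : X -> A, [/\ forall x, nA (a x - b x) <= e,
    forall nm : A -> R, real_seminorm nm ->
      exists L, forall x y, nm (b x - b y) <= L * d x y &
    forall star : A -> A, {morph star : u v / u + v} ->
      (forall (c : R[i]) u, star (c *: u) = c^* *: star u) ->
      (forall x, star (a x) = a x) -> forall x, star (b x) = b x].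
Proof.
move=> ca e0.
have /choice [delta hdelta] :
    forall x, exists dl, 0 < dl /\ forall y, d x y < dl -> nA (a x - a y) < e.
  by move=> x; have [dl ? ?] := ca x e e0; exists dl.
have [n [g [w [Lw [w0 w_sum w_supp w_lip]]]]] :=
  lipschitz_partition_of_unity hm dc (fun x => (hdelta x).1).
exists (fun x => \sum_(k < n) (w k x)%:C *: a (g k)); split.
- move=> x.
  have -> : a x - \sum_(k < n) (w k x)%:C *: a (g k) =
            \sum_(k < n) (w k x)%:C *: (a x - a (g k)).
    under [RHS]eq_bigr => k _ do rewrite scalerBr.
    by rewrite sumrB -scaler_suml -rmorph_sum w_sum rmorph1 scale1r.
  apply: le_trans (seminorm_sum hnA _) _.
  rewrite -[e]mul1r -(w_sum x) mulr_suml; apply: ler_sum => k _.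
  rewrite seminormZ // ger0_norm //.
  have [near|far] := ltP (d (g k) x) (delta (g k)); last by rewrite w_supp ?mul0r.
  by rewrite ler_wpM2l // seminorm_distC // ltW // (hdelta _).2.
- move=> nm hnm; exists (Lw * \sum_(k < n) nm (a (g k))) => x y.
  rewrite -sumrB.
  under eq_bigr => k _ do rewrite -scalerBl -rmorphB.
  apply: le_trans (seminorm_sum hnm _) _.
  rewrite mulrAC mulr_sumr; apply: ler_sum => k _.
  by rewrite seminormZ // ler_wpM2r // seminorm_ge0.
- move=> star starD starZ a_sa x.
  have star0 : star 0 = 0 by apply: (@addrI _ (star 0)); rewrite -starD !addr0.
  rewrite (big_morph star starD star0); apply: eq_bigr => k _.
  by rewrite starZ conj_real_complex a_sa.
Qed.

End LipschitzApproximation.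

Section LipschitzConstant.
Variables (R : realType) (X : Type) (d : X -> X -> R) (A : algType R[i]) (nn : A -> R).
Hypothesis hm : is_metric d.

Lemma metric_gt0 x y : x <> y -> 0 < d x y.
Proof.
case: hm => d_ge0 d_eq0 _ _ xy; rewrite lt_neqAle d_ge0 andbT eq_sym.
by apply/eqP => /d_eq0.
Qed.

Lemma lip_n_le_lipschitz b L :
  (forall x y, nn (b x - b y) <= L * d x y) -> (lip_n d nn b <= L%:E)%E.
Proof.
move=> bL; apply: ge_ereal_sup => _ [x [y [xy ->]]].
by rewrite lee_fin ler_pdivrMr ?metric_gt0 ?bL.
Qed.

Lemma Lq_lt_pinfty (nA : A -> R) mu q b L :
  (forall x y, nn (b x - b y) <= L * d x y) -> (Lq d nA nn mu q b < +oo)%E.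
Proof.
move=> bL; rewrite /Lq gt_max ltry andbT.
exact: le_lt_trans (lip_n_le_lipschitz bL) (ltry _).
Qed.

End LipschitzConstant.

Section LowerSemicontinuity.
Variables (R : realType) (X : Type) (d : X -> X -> R) (A : algType R[i]) (nA nn : A -> R).
Hypotheses (hm : is_metric d) (dc : d_compact d) (hnA : is_norm_C nA)
  (heq : is_equiv_norm nA nn).

Let hsA := norm_C_real_seminorm hnA.
Let hsn := equiv_norm_real_seminorm heq.

Lemma lip_n_lsc (a : X -> A) (t : R) : contf d nA a -> (t%:E < lip_n d nn a)%E ->
  exists2 delta : R, 0 < delta & forall b, contf d nA b ->
    supnorm nA (fun x => a x - b x) < delta -> (t%:E < lip_n d nn b)%E.
Proof.
move=> ca /ereal_sup_gt[_ [x1 [x2 [x12 ->]]]]; rewrite lte_fin => t_lt.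
have [_ _ _ _ [c1 _ [c2 c20 hc]]] := heq.
have D0 : 0 < d x1 x2 by apply: metric_gt0.
set D := d x1 x2 in D0 t_lt *; set Na := nn (a x1 - a x2) in t_lt *.
set g := Na / D - t.
have g0 : 0 < g by rewrite subr_gt0.
have Na_eq : Na = t * D + g * D by rewrite /g mulrBl divfK ?gt_eqF // addrC subrK.
have gD : 0 < g * D by rewrite mulr_gt0.
exists (g * D / (4 * c2)); first by rewrite divr_gt0 // mulr_gt0.
move=> b cb ab_lt.
apply: lt_le_trans (_ : t%:E < (nn (b x1 - b x2) / D)%:E)%E _; last first.
  by apply: ereal_sup_ubound; exists x1, x2.
have near_x x : nn (a x - b x) < g * D / 4.
  apply: le_lt_trans (proj2 (hc _)) _.
  rewrite (_ : g * D / 4 = c2 * (g * D / (4 * c2))); last by field; rewrite gt_eqF.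
  rewrite ltr_pM2l //; apply: le_lt_trans ab_lt.
  exact: (ler_supnorm_contf hm dc hsA x (contfB hsA ca cb)).
have := near_x x1; have := near_x x2; rewrite seminorm_distC // => h2 h1.
have t1 := seminorm_dist_triangle hsn (a x1) (b x1) (a x2).
have t2 := seminorm_dist_triangle hsn (b x1) (b x2) (a x2).
rewrite lte_fin ltr_pdivlMr // -/Na in t1 *; lra.
Qed.

Lemma ler_inf_supnormB (I : Type) (P : set I) (h : I -> X -> A) (a b : X -> A) :
  contf d nA a -> contf d nA b -> (exists i, P i) ->
  (forall i, P i -> contf d nA (h i)) ->
  inf [set supnorm nA (fun x => a x - h i x) | i in P]
    - supnorm nA (fun x => a x - b x) <=
  inf [set supnorm nA (fun x => b x - h i x) | i in P].
Proof.
move=> ca cb [i0 Pi0] ch.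
have nA_ge0 := seminorm_ge0 hsA.
set s := supnorm nA (fun x => a x - b x).
have s0 : 0 <= s by apply: supnorm_ge0.
apply: lb_le_inf; first by exists (supnorm nA (fun x => b x - h i0 x)), i0.
move=> _ [i Pi <-]; rewrite lerBlDr.
have lb : has_lbound [set supnorm nA (fun x => a x - h i x) | i in P].
  by exists 0 => _ [j _ <-]; apply: supnorm_ge0.
apply: le_trans (_ : _ <= supnorm nA (fun x => a x - h i x)) _.
  by apply: (ge_inf lb); exists i.
apply: supnorm_le_ub; first by rewrite addr_ge0 // supnorm_ge0.
move=> y; apply: le_trans (seminorm_dist_triangle hsA _ (b y) _) _.
rewrite addrC lerD //.
- exact: (ler_supnorm_contf hm dc hsA y (contfB hsA cb (ch i Pi))).
- exact: (ler_supnorm_contf hm dc hsA y (contfB hsA ca cb)).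
Qed.

Lemma state_dist (star : A -> A) mu a b : is_state d star nA mu ->
  contf d nA a -> contf d nA b ->
  `|mu a - mu b| <= (supnorm nA (fun x => a x - b x))%:C.
Proof.
move=> [muD _ _ mu_le _] ca cb.
have cab := contfB hsA ca cb.
suff -> : mu a - mu b = mu (fun x => a x - b x) by apply: mu_le.
have ab_b : (fun x => a x - b x + b x) = a by apply/funext => x; rewrite subrK.
by have := muD _ _ cab cb; rewrite ab_b => ->; rewrite addrK.
Qed.

Lemma qterm_lipschitz (star : A -> A) mu q (a b : X -> A) : is_state d star nA mu ->
  contf d nA a -> contf d nA b ->
  qterm d nA mu q a - (1 + nA 1) * supnorm nA (fun x => a x - b x) <= qterm d nA mu q b.
Proof.
move=> hst ca cb.
have nA_ge0 := seminorm_ge0 hsA.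
set s := supnorm nA (fun x => a x - b x).
have s0 : 0 <= s by apply: supnorm_ge0.
have s_le : s <= (1 + nA 1) * s by rewrite mulrDl mul1r lerDl mulr_ge0.
have cst1 (c : R[i]) : contf d nA (fun _ => c *: 1) by apply: contf_cst.
case: q => /=.
- apply: le_trans (ler_inf_supnormB (h := id) ca cb _ _); first by rewrite lerB.
    by exists (fun _ => 0 *: 1); split => // x; exists 0.
  by move=> c [].
- apply: le_trans (ler_inf_supnormB (h := fun c _ => c *: 1) ca cb _ _).
  + by rewrite lerB.
  + by exists 0.
  + by move=> c _.
- rewrite lerBlDr; apply: supnorm_le_ub.
    by rewrite addr_ge0 ?mulr_ge0 ?addr_ge0 ?supnorm_ge0.
  move=> y.
  have -> : a y - mu a *: 1 =
      (a y - b y) + ((b y - mu b *: 1) + (mu b - mu a) *: 1).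
    by rewrite scalerBl !addrA !subrK.
  apply: le_trans (seminormD hsA _ _) _.
  apply: le_trans (lerD (lexx _) (seminormD hsA _ _)) _.
  have ab_y : nA (a y - b y) <= s.
    exact: (ler_supnorm_contf hm dc hsA y (contfB hsA ca cb)).
  have b_y : nA (b y - mu b *: 1) <= supnorm nA (fun x => b x - mu b *: 1).
    exact: (ler_supnorm_contf hm dc hsA y (contfB hsA cb (cst1 _))).
  have mu_ab : nA ((mu b - mu a) *: 1) <= nA 1 * s.
    have [_ _ _ nAZ] := hnA.
    rewrite -lecR nAZ rmorphM /= mulrC distrC ler_wpM2l ?ler0c //.
    exact: state_dist hst ca cb.
  lra.
Qed.

Lemma Lq_lsc (star : A -> A) mu q : is_state d star nA mu ->
  lsc_on_CXA d nA (Lq d nA nn mu q).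
Proof.
move=> hst a ca [t| |] t_lt;
  [|by move: t_lt; rewrite ltNge leey|by exists 1 => // b _ _; rewrite lt_max ltNyr orbT].
move: t_lt; rewrite /Lq lt_max => /orP[lip_lt|q_lt].
  have [delta delta0 hb] := lip_n_lsc ca lip_lt.
  by exists delta => // b cb ab_lt; rewrite lt_max hb.
rewrite lte_fin in q_lt.
set K := 1 + nA 1.
have K0 : 0 < K by rewrite ltr_pwDl // seminorm_ge0.
set g := qterm d nA mu q a - t.
have g0 : 0 < g by rewrite subr_gt0.
exists (g / (2 * K)); first by rewrite divr_gt0 // mulr_gt0.
move=> b cb ab_lt; rewrite lt_max lte_fin; apply/orP; right.
have := qterm_lipschitz q hst ca cb.
have : K * supnorm nA (fun x => a x - b x) < g / 2.
  by rewrite (_ : g / 2 = K * (g / (2 * K))) ?ltr_pM2l //; field; rewrite gt_eqF.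
rewrite /g /K; lra.
Qed.

End LowerSemicontinuity.

Theorem lemma2p6 (R : realType) (X : Type) (d : X -> X -> R)
  (A : algType R[i]) (star : A -> A) (nA nn : A -> R)
  (mu : (X -> A) -> R[i]) (q : qsel) :
  is_metric d -> d_compact d ->
  is_unital_Cstar star nA ->
  is_state d star nA mu ->
  is_equiv_norm nA nn ->
  [/\ lsc_on_CXA d nA (Lq d nA nn mu q),
      (forall a, contf d nA a -> forall e : R, 0 < e ->
         exists b, [/\ contf d nA b, (Lq d nA nn mu q b < +oo)%E &
                       supnorm nA (fun x => a x - b x) < e]) &
      (forall a, contf d nA a -> (forall x, star (a x) = a x) ->
         forall e : R, 0 < e ->
         exists b, [/\ contf d nA b, (forall x, star (b x) = b x),
                       (Lq d nA nn mu q b < +oo)%E &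
                       supnorm nA (fun x => a x - b x) < e])].
Proof.
move=> hm dc [hnA _ _ [starD starZ _ _] _] hst heq.
have hsA := norm_C_real_seminorm hnA.
have approx a e : contf d nA a -> 0 < e -> exists b, [/\ contf d nA b,
    (Lq d nA nn mu q b < +oo)%E, supnorm nA (fun x => a x - b x) < e &
    ((forall x, star (a x) = a x) -> forall x, star (b x) = b x)].
  move=> ca e0; have e20 : 0 < e / 2 by rewrite divr_gt0.
  have [b [ab_le b_lip b_star]] := lipschitz_approximation hm dc hsA ca e20.
  exists b; split.
  - by have [L bL] := b_lip _ hsA; apply: lipschitz_contf hm bL.
  - by have [L bL] := b_lip _ (equiv_norm_real_seminorm heq); apply: Lq_lt_pinfty bL.
  - by apply: le_lt_trans (supnorm_le_ub (ltW e20) ab_le) _; rewrite ltr_pdivrMr ?ltr_pMr ?ltr1n.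
  - exact: b_star.
split; first exact: Lq_lsc hst.
- by move=> a ca e e0; have [b [? ? ? _]] := approx a e ca e0; exists b.
- move=> a ca a_sa e e0; have [b [? ? ? b_sa]] := approx a e ca e0.
  by exists b; split => //; apply: b_sa.
Qed.
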